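(* Let $\Omega$ be the sojourn time of an arbitrary batch in the stationary regime, i.e. the random variable whose Laplace transform is $$\mathbb{E}(e^{-s\Omega})=\sum_{n=0}^\infty\sum_{b=1}^\infty e^*_{n,b}(s)\,\mathbb{P}(N=n)\,\mathbb{P}(B=b),$$ where $B$ is the geometric batch size and $N$ (independent of $B$) has the stationary distribution $\mathbb{P}(N=0)=1-\frac{\rho}{1-q}$ and $\mathbb{P}(N=n)=\left(1-\frac{\rho}{1-q}\right)\rho(\rho+q)^{n-1}$ for $n\ge1$. Then for $\Re(s)\ge0$, $$\mathbb{E}(e^{-s\Omega})=\frac{1-\rho-q}{q(\rho+q)}\left(\rho^2F(s;\rho+q,q)+\frac{q^3+\rho\,(qs+\rho+2q(1-q))\,E(s;q,q)}{q+\rho+qs-q^2}\right).$$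
   Context: Queueing model: an $M^{[X]}/M/1$ processor-sharing queue. Batches of jobs arrive according to a Poisson process with rate $\rho>0$; each job requires an exponentially distributed amount of service with mean $1$; the server has unit capacity, shared equally among all jobs present (processor sharing); interarrival times, batch sizes and service requirements are mutually independent. Batch sizes are geometric: $\mathbb{P}(B=b)=(1-q)q^{b-1}$, $b\ge1$, where $q\in(0,1)$ and $\rho+q<1$. For $n\ge0$, $b\ge1$, $\Omega_{n,b}$ denotes the sojourn time of a tagged batch (time between its arrival and the departure of the last of its jobs) given that $n$ jobs are in the system at its arrival and that the batch contains $b$ jobs, and $e^*_{n,b}(s)=\mathbb{E}(e^{-s\Omega_{n,b}})$ for $\Re(s)\ge0$. Let $\mathbb{D}=\{u\in\mathbb{C}:|u|<1\}$ and $E(s;u,v)=\sum_{n\ge0}\sum_{b\ge1}e^*_{n,b}(s)u^nv^b$ for $(u,v)\in\mathbb{D}^2$. Define $F(s;u,v)=\frac{E(s;u,v)-E(s;q,v)}{u-q}$ for $u\in\mathbb{D}\setminus\{q\}$ and $F(s;q,v)=\frac{\partial E}{\partial u}(s;q,v)$. *)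

From Stdlib Require Import Reals ClassicalEpsilon.
From Coquelicot Require Import Coquelicot.
Open Scope R_scope.

(* Sum of a complex series, taken componentwise (all series used below are
   absolutely convergent, so this is the usual sum). *)
Definition CSeries (a : nat -> C) : C :=
  (Series (fun k => Re (a k)), Series (fun k => Im (a k))).

(* Uniformized embedded jump chain of the tagged-batch process.
   State (n, b): n other jobs, b remaining jobs of the tagged batch.
   While b >= 1 the total event rate is rho + 1 (batch arrivals at rate rho,
   service completions at rate 1 since the server is busy); a batch arrival
   adds j >= 1 other jobs with probability (1-q) q^(j-1); a completion is a
   tagged job with probability b/(n+b), another job with probability n/(n+b).
   absorb rho q k n b = P(the chain started at (n,b) reaches b = 0 at exactly
   jump number k). *)
Fixpoint absorb (rho q : R) (k : nat) : nat -> nat -> R :=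
  match k with
  | O => fun n b => match b with O => 1 | S _ => 0 end
  | S k' => fun n b =>
      match b with
      | O => 0
      | S b' =>
          rho / (1 + rho) *
            Series (fun j => (1 - q) * q ^ j * absorb rho q k' (n + S j)%nat b)
          + 1 / (1 + rho) *
            (INR n / INR (n + b) * absorb rho q k' (Nat.pred n) b
             + INR b / INR (n + b) * absorb rho q k' n b')
      end
  end.

(* e*_{n,b}(s) = E exp(-s Omega_{n,b}).  Omega_{n,b} is the sum of K i.i.d.
   Exp(1+rho) holding times, K the absorption time of the jump chain above,
   independent of the holding times; hence
   E e^{-s Omega} = sum_k P(K = k) ((1+rho)/(1+rho+s))^k. *)
Definition estar (rho q : R) (s : C) (n b : nat) : C :=
  CSeries (fun k =>
    (RtoC (absorb rho q k n b) * Cpow (RtoC (1 + rho) / (RtoC (1 + rho) + s)) k)%C).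

Definition Egen (rho q : R) (s u v : C) : C :=
  CSeries (fun n => CSeries (fun b =>
    (estar rho q s n (S b) * Cpow u n * Cpow v (S b))%C)).

Definition Fgen (rho q : R) (s u v : C) : C :=
  if excluded_middle_informative (u = RtoC q)
  then C_derive (fun w => Egen rho q s w v) (RtoC q)
  else ((Egen rho q s u v - Egen rho q s (RtoC q) v) / (u - RtoC q))%C.

Definition probN (rho q : R) (n : nat) : R :=
  match n with
  | O => 1 - rho / (1 - q)
  | S m => (1 - rho / (1 - q)) * rho * (rho + q) ^ m
  end.

Definition probB (q : R) (b : nat) : R :=
  match b with
  | O => 0
  | S m => (1 - q) * q ^ m
  end.

Definition sojournLT (rho q : R) (s : C) : C :=
  CSeries (fun n => CSeries (fun b =>
    (estar rho q s n (S b) * RtoC (probN rho q n) * RtoC (probB q (S b)))%C)).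

(* Conditioning on the number N of jobs found by the tagged batch, whose law mixes a point
   mass at 0 with a geometric law of ratio rho + q, the transform of Omega equals
     K (q E(s;0,q) + rho E(s;rho+q,q)),   K = (1 - rho - q) / (q (rho + q)),
   and rho E(s;rho+q,q) = rho^2 F(s;rho+q,q) + rho E(s;q,q).  It remains to eliminate
   E(s;0,q).  First-step analysis of the tagged-batch chain in an otherwise empty system gives
     (1 + rho + s) e*_{0,b+1} = rho sum_j (1-q) q^j e*_{j+1,b+1} + e*_{0,b},
   and summing this against q^(b+1) yields
     (q + rho + q s - q^2) E(s;0,q) = rho (1 - q) E(s;q,q) + q^2.
   Every rearrangement of the double series is justified by |Re e*|, |Im e*| <= 1, which holds
   because the absorption probabilities have total mass at most 1 and
   |(1 + rho) / (1 + rho + s)| <= 1 when Re s >= 0. *)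

From Stdlib Require Import Reals Lra Lia ClassicalEpsilon.
From Coquelicot Require Import Coquelicot.
Open Scope R_scope.

Lemma sum_n_incr_1 (u : nat -> R) N :
  sum_n u (S N) = u 0%nat + sum_n (fun k => u (S k)) N.
Proof.
  induction N as [|N IH].
  - rewrite sum_Sn, !sum_O. reflexivity.
  - rewrite sum_Sn, IH, (sum_Sn (fun k => u (S k))). unfold plus; simpl. ring.
Qed.

Lemma sum_n_lin (x y : R) (u v : nat -> R) N :
  sum_n (fun k => x * u k + y * v k) N = x * sum_n u N + y * sum_n v N.
Proof.
  induction N as [|N IH].
  - rewrite !sum_O. reflexivity.
  - rewrite !sum_Sn, IH. unfold plus; simpl. ring.
Qed.

(* The generic [scal] lemmas of Coquelicot, restated with [Rmult] so that they unify. *)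
Lemma sum_n_Rscal_l (x : R) (u : nat -> R) N :
  sum_n (fun k => x * u k) N = x * sum_n u N.
Proof. exact (sum_n_scal_l x u N). Qed.

Lemma ex_series_Rscal_l (x : R) (u : nat -> R) :
  ex_series u -> ex_series (fun k => x * u k).
Proof. exact (ex_series_scal_l x u). Qed.

Lemma sum_n_le_sum_n (u : nat -> R) M N :
  (forall k, 0 <= u k) -> (M <= N)%nat -> sum_n u M <= sum_n u N.
Proof.
  intros Hu HMN. induction HMN as [|N _ IH]; [lra|].
  rewrite sum_Sn. unfold plus; simpl. specialize (Hu (S N)). lra.
Qed.

Lemma sum_n_nonneg (u : nat -> R) N : (forall k, 0 <= u k) -> 0 <= sum_n u N.
Proof.
  intros Hu. apply Rle_trans with (u 0%nat); [apply Hu|].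
  rewrite <- sum_O. apply sum_n_le_sum_n; [exact Hu|lia].
Qed.

Lemma term_le_sum_n (u : nat -> R) k N :
  (forall k, 0 <= u k) -> (k <= N)%nat -> u k <= sum_n u N.
Proof.
  intros Hu Hk. apply Rle_trans with (sum_n u k); [|now apply sum_n_le_sum_n].
  destruct k as [|k]; [rewrite sum_O; lra|].
  rewrite sum_Sn. unfold plus; simpl.
  assert (0 <= sum_n u k) by now apply sum_n_nonneg.
  lra.
Qed.

(* No summability needed: on a divergent series [Series] returns the junk value 0. *)
Lemma Series_nonneg (u : nat -> R) : (forall k, 0 <= u k) -> 0 <= Series u.
Proof.
  intros Hu.
  assert (H : Rbar_le (Lim_seq (fun _ => 0)) (Lim_seq (sum_n u))).
  { apply Lim_seq_le_loc. exists 0%nat. intros N _. now apply sum_n_nonneg. }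
  rewrite Lim_seq_const in H. unfold Series.
  destruct (Lim_seq (sum_n u)); simpl in *; lra.
Qed.

Lemma sum_n_zero N : sum_n (fun _ => 0) N = 0.
Proof. exact (sum_n_m_const_zero 0 N). Qed.

Lemma Series_zero : Series (fun _ => 0) = 0.
Proof.
  rewrite (Series_ext _ (fun _ => 0 * 1)) by (intros; ring).
  now rewrite Series_scal_l, Rmult_0_l.
Qed.

Lemma sum_n_le_Series (u : nat -> R) N :
  (forall k, 0 <= u k) -> ex_series u -> sum_n u N <= Series u.
Proof.
  intros Hu [l Hl]. rewrite (is_series_unique _ _ Hl).
  apply (is_lim_seq_incr_compare (sum_n u)); [exact Hl|].
  intros n. apply sum_n_le_sum_n; [exact Hu|lia].
Qed.

Lemma term_le_Series (u : nat -> R) k :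
  (forall k, 0 <= u k) -> ex_series u -> u k <= Series u.
Proof.
  intros Hu Hex. apply Rle_trans with (sum_n u k).
  - now apply term_le_sum_n.
  - now apply sum_n_le_Series.
Qed.

Lemma ex_series_bounded_sums (u : nat -> R) L :
  (forall k, 0 <= u k) -> (forall N, sum_n u N <= L) -> ex_series u /\ Series u <= L.
Proof.
  intros Hu HL.
  destruct (ex_finite_lim_seq_incr (sum_n u) L) as [l Hl]; [|exact HL|].
  { intros n. rewrite sum_Sn. unfold plus; simpl. specialize (Hu (S n)). lra. }
  split; [now exists l|].
  rewrite (is_series_unique u l Hl).
  exact (is_lim_seq_le (sum_n u) (fun _ => L) l L HL Hl (is_lim_seq_const L)).
Qed.

Lemma ex_series_Rle (a b : nat -> R) :
  (forall n, Rabs (a n) <= b n) -> ex_series b -> ex_series a.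
Proof. exact (@ex_series_le R_AbsRing R_CompleteNormedModule a b). Qed.

Lemma Series_sum_n_comm (b : nat -> nat -> R) K :
  (forall k, (k <= K)%nat -> ex_series (fun j => b j k)) ->
  ex_series (fun j => sum_n (b j) K) /\
  Series (fun j => sum_n (b j) K) = sum_n (fun k => Series (fun j => b j k)) K.
Proof.
  induction K as [|K IH]; intros Hex.
  - rewrite sum_O. split.
    + eapply ex_series_ext; [|apply (Hex 0%nat); lia]. intros j; now rewrite sum_O.
    + apply Series_ext. intros j; now rewrite sum_O.
  - destruct IH as [IH1 IH2]; [intros k Hk; apply Hex; lia|].
    assert (Hj : forall j, sum_n (b j) (S K) = sum_n (b j) K + b j (S K))
      by (intros j; now rewrite sum_Sn).
    rewrite (Series_ext _ _ Hj), sum_Sn, <- IH2. split.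
    + eapply ex_series_ext; [intros j; symmetry; apply Hj|].
      exact (ex_series_plus _ _ IH1 (Hex (S K) (le_n _))).
    + apply Series_plus; [exact IH1|exact (Hex (S K) (le_n _))].
Qed.

Lemma Series_comm_nonneg_le (b : nat -> nat -> R) :
  (forall j k, 0 <= b j k) -> (forall j, ex_series (b j)) ->
  ex_series (fun j => Series (b j)) ->
  (forall k, ex_series (fun j => b j k)) /\ ex_series (fun k => Series (fun j => b j k)) /\
  Series (fun k => Series (fun j => b j k)) <= Series (fun j => Series (b j)).
Proof.
  intros Hb Hrow Hrows.
  assert (Hrow0 : forall j, 0 <= Series (b j)) by (intros j; now apply Series_nonneg).
  assert (Hcol : forall k, ex_series (fun j => b j k)).
  { intros k. apply (ex_series_bounded_sums _ (Series (fun j => Series (b j)))); [easy|].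
    intros J. apply Rle_trans with (sum_n (fun j => Series (b j)) J).
    - apply sum_n_m_le. intros j. now apply term_le_Series.
    - now apply sum_n_le_Series. }
  destruct (ex_series_bounded_sums (fun k => Series (fun j => b j k))
              (Series (fun j => Series (b j)))) as [Hcols Hle].
  - intros k. now apply Series_nonneg.
  - intros K. destruct (Series_sum_n_comm b K (fun k _ => Hcol k)) as [_ <-].
    apply Series_le; [|exact Hrows]. intros j. split.
    + now apply sum_n_nonneg.
    + now apply sum_n_le_Series.
  - easy.
Qed.

Lemma Series_comm_nonneg (b : nat -> nat -> R) :
  (forall j k, 0 <= b j k) -> (forall j, ex_series (b j)) ->
  ex_series (fun j => Series (b j)) ->
  (forall k, ex_series (fun j => b j k)) /\ ex_series (fun k => Series (fun j => b j k)) /\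
  Series (fun k => Series (fun j => b j k)) = Series (fun j => Series (b j)).
Proof.
  intros Hb Hrow Hrows.
  destruct (Series_comm_nonneg_le b Hb Hrow Hrows) as [Hcol [Hcols Hle]].
  destruct (Series_comm_nonneg_le (fun k j => b j k)) as [_ [_ Hge]]; auto.
  repeat split; auto. now apply Rle_antisym.
Qed.

Lemma Series_Rabs_le (u M : nat -> R) :
  (forall k, Rabs (u k) <= M k) -> ex_series M -> Rabs (Series u) <= Series M.
Proof.
  intros Hu HM. apply Rle_trans with (Series (fun k => Rabs (u k))).
  - apply Series_Rabs. apply (ex_series_Rle _ M); [|exact HM].
    intros k. rewrite Rabs_Rabsolu. apply Hu.
  - apply Series_le; [|exact HM]. intros k. split; [apply Rabs_pos|apply Hu].
Qed.

(* Fubini, reduced to the nonnegative case by writing a = (a + M) - M. *)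
Lemma Series_comm (a M : nat -> nat -> R) :
  (forall j k, Rabs (a j k) <= M j k) -> (forall j, ex_series (M j)) ->
  ex_series (fun j => Series (M j)) ->
  Series (fun k => Series (fun j => a j k)) = Series (fun j => Series (a j)).
Proof.
  intros Ha Hrow Hrows.
  assert (HM : forall j k, 0 <= M j k)
    by (intros j k; eapply Rle_trans; [apply Rabs_pos|apply Ha]).
  assert (Harow : forall j, ex_series (a j))
    by (intros j; exact (ex_series_Rle _ _ (Ha j) (Hrow j))).
  assert (Harows : ex_series (fun j => Series (a j))).
  { apply (ex_series_Rle _ (fun j => Series (M j))); [|exact Hrows].
    intros j. now apply Series_Rabs_le. }
  set (b := fun j k => a j k + M j k).
  assert (Hb : forall j k, 0 <= b j k).
  { intros j k. unfold b. specialize (Ha j k). apply Rabs_le_between in Ha. lra. }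
  assert (Hbrow : forall j, ex_series (b j))
    by (intros j; exact (ex_series_plus _ _ (Harow j) (Hrow j))).
  assert (Hbsum : forall j, Series (b j) = Series (a j) + Series (M j))
    by (intros j; now apply Series_plus).
  assert (Hbrows : ex_series (fun j => Series (b j))).
  { eapply ex_series_ext; [intros j; symmetry; apply Hbsum|].
    exact (ex_series_plus _ _ Harows Hrows). }
  destruct (Series_comm_nonneg b Hb Hbrow Hbrows) as [Hbcol [Hbcols Hb_comm]].
  destruct (Series_comm_nonneg M HM Hrow Hrows) as [HMcol [HMcols HM_comm]].
  assert (Hacol : forall k,
    Series (fun j => a j k) = Series (fun j => b j k) - Series (fun j => M j k)).
  { intros k. rewrite <- Series_minus by auto. apply Series_ext. intros j; unfold b; ring. }
  rewrite (Series_ext _ _ Hacol), Series_minus, Hb_comm, HM_comm by auto.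
  rewrite <- Series_minus by auto. apply Series_ext. intros j. rewrite Hbsum. ring.
Qed.

Definition ex_CSeries (a : nat -> C) : Prop :=
  ex_series (fun k => Re (a k)) /\ ex_series (fun k => Im (a k)).

(* [CSeries] sums real and imaginary parts separately, so domination is stated componentwise. *)
Definition Cbounded (c : C) (M : R) : Prop := Rabs (Re c) <= M /\ Rabs (Im c) <= M.

Lemma Re_CSeries (a : nat -> C) : Re (CSeries a) = Series (fun k => Re (a k)).
Proof. reflexivity. Qed.

Lemma Im_CSeries (a : nat -> C) : Im (CSeries a) = Series (fun k => Im (a k)).
Proof. reflexivity. Qed.

Lemma C_ext (c d : C) : Re c = Re d -> Im c = Im d -> c = d.
Proof. apply injective_projections. Qed.

Lemma RtoC_neq0 (x : R) : x <> 0 -> RtoC x <> 0%C.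
Proof. intros Hx H. apply Hx. now apply RtoC_inj. Qed.

Lemma Im_le_Cmod (c : C) : Rabs (Im c) <= Cmod c.
Proof.
  rewrite <- (Rabs_pos_eq (Cmod c)) by apply Cmod_ge_0.
  apply Rsqr_le_abs_0. unfold Rsqr.
  assert (H := Cmod2_alt c). simpl in H. nra.
Qed.

Lemma Cbounded_le (c : C) (M M' : R) : Cbounded c M -> M <= M' -> Cbounded c M'.
Proof. intros [Hre Him] HM. split; lra. Qed.

Lemma Cbounded_Cmod (c : C) (M : R) : Cmod c <= M -> Cbounded c M.
Proof.
  intros Hc. split; eapply Rle_trans; [apply re_le_Cmod|exact Hc|apply Im_le_Cmod|exact Hc].
Qed.

Lemma Cbounded_scal (x : R) (c : C) (M : R) :
  Cbounded c M -> Cbounded (RtoC x * c) (Rabs x * M).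
Proof.
  intros [Hre Him]. unfold Cbounded. rewrite re_scal_l, im_scal_l, !Rabs_mult.
  split; apply Rmult_le_compat_l; auto using Rabs_pos.
Qed.

Lemma ex_CSeries_bounded (a : nat -> C) (M : nat -> R) :
  (forall k, Cbounded (a k) (M k)) -> ex_series M -> ex_CSeries a.
Proof. intros Ha HM. split; apply (ex_series_Rle _ M); auto; intros k; apply Ha. Qed.

Lemma CSeries_bounded (a : nat -> C) (M : nat -> R) :
  (forall k, Cbounded (a k) (M k)) -> ex_series M -> Cbounded (CSeries a) (Series M).
Proof. intros Ha HM. split; apply Series_Rabs_le; auto; intros k; apply Ha. Qed.

Lemma ex_CSeries_scal_R (x : R) (a : nat -> C) :
  ex_CSeries a -> ex_CSeries (fun k => RtoC x * a k)%C.
Proof.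
  intros [Hre Him]. split.
  - eapply ex_series_ext; [intros k; symmetry; apply re_scal_l|].
    now apply ex_series_Rscal_l.
  - eapply ex_series_ext; [intros k; symmetry; apply im_scal_l|].
    now apply ex_series_Rscal_l.
Qed.

Lemma ex_CSeries_plus (a b : nat -> C) :
  ex_CSeries a -> ex_CSeries b -> ex_CSeries (fun k => a k + b k)%C.
Proof.
  intros [Hare Haim] [Hbre Hbim].
  split; [exact (ex_series_plus _ _ Hare Hbre)|exact (ex_series_plus _ _ Haim Hbim)].
Qed.

Lemma CSeries_ext (a b : nat -> C) : (forall k, a k = b k) -> CSeries a = CSeries b.
Proof.
  intros H. unfold CSeries.
  rewrite (Series_ext _ _ (fun k => f_equal Re (H k))), (Series_ext _ _ (fun k => f_equal Im (H k))).
  reflexivity.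
Qed.

Lemma CSeries_zero : CSeries (fun _ => 0%C) = 0%C.
Proof. apply C_ext; rewrite ?Re_CSeries, ?Im_CSeries; apply Series_zero. Qed.

Lemma CSeries_scal_R (x : R) (a : nat -> C) :
  CSeries (fun k => RtoC x * a k)%C = (RtoC x * CSeries a)%C.
Proof.
  apply C_ext; rewrite ?re_scal_l, ?im_scal_l, ?Re_CSeries, ?Im_CSeries, <- Series_scal_l;
    apply Series_ext; intros k; [apply re_scal_l|apply im_scal_l].
Qed.

Lemma CSeries_scal_R_r (m : nat -> R) (c : C) :
  CSeries (fun k => RtoC (m k) * c)%C = (RtoC (Series m) * c)%C.
Proof.
  apply C_ext; rewrite ?re_scal_l, ?im_scal_l, ?Re_CSeries, ?Im_CSeries, <- Series_scal_r;
    apply Series_ext; intros k; [rewrite re_scal_l|rewrite im_scal_l]; ring.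
Qed.

Lemma CSeries_plus (a b : nat -> C) :
  ex_CSeries a -> ex_CSeries b -> CSeries (fun k => a k + b k)%C = (CSeries a + CSeries b)%C.
Proof.
  intros [Hare Haim] [Hbre Hbim].
  apply C_ext; [change (Re (?u + ?v)%C) with (Re u + Re v)|change (Im (?u + ?v)%C) with (Im u + Im v)];
    rewrite ?Re_CSeries, ?Im_CSeries, <- Series_plus by assumption; reflexivity.
Qed.

Lemma CSeries_scal (c : C) (a : nat -> C) :
  ex_CSeries a -> CSeries (fun k => c * a k)%C = (c * CSeries a)%C.
Proof.
  intros [Hre Him]. destruct c as [x y]. apply C_ext.
  - change (Re ((x, y) * ?u)%C) with (x * Re u - y * Im u).
    rewrite !Re_CSeries, Im_CSeries, <- !Series_scal_l, <- Series_minus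
      by (apply ex_series_Rscal_l; assumption).
    apply Series_ext. intros k. unfold Re, Im. simpl. ring.
  - change (Im ((x, y) * ?u)%C) with (x * Im u + y * Re u).
    rewrite !Im_CSeries, Re_CSeries, <- !Series_scal_l, <- Series_plus
      by (apply ex_series_Rscal_l; assumption).
    apply Series_ext. intros k. unfold Re, Im. simpl. ring.
Qed.

Lemma CSeries_incr_1 (a : nat -> C) :
  ex_CSeries a -> CSeries a = (a 0%nat + CSeries (fun k => a (S k)))%C.
Proof.
  intros [Hre Him].
  apply C_ext; [change (Re (?u + ?v)%C) with (Re u + Re v)|change (Im (?u + ?v)%C) with (Im u + Im v)];
    rewrite ?Re_CSeries, ?Im_CSeries; now apply Series_incr_1.
Qed.

Lemma CSeries_comm (a : nat -> nat -> C) (M : nat -> nat -> R) :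
  (forall j k, Cbounded (a j k) (M j k)) -> (forall j, ex_series (M j)) ->
  ex_series (fun j => Series (M j)) ->
  CSeries (fun k => CSeries (fun j => a j k)) = CSeries (fun j => CSeries (a j)).
Proof.
  intros Ha Hrow Hrows. apply C_ext; rewrite ?Re_CSeries, ?Im_CSeries.
  - apply (Series_comm _ M); auto. intros j k; apply Ha.
  - apply (Series_comm _ M); auto. intros j k; apply Ha.
Qed.

Lemma INR_ratio_split n b :
  0 <= INR n / INR (n + S b) /\ 0 <= INR (S b) / INR (n + S b) /\
  INR n / INR (n + S b) + INR (S b) / INR (n + S b) = 1.
Proof.
  assert (Hpos : 0 < INR (n + S b)) by (apply lt_0_INR; lia).
  assert (Hn := pos_INR n). assert (Hb := pos_INR (S b)).
  repeat split; try (apply Rdiv_le_0_compat; lra).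
  rewrite <- Rdiv_plus_distr, <- plus_INR. field. lra.
Qed.

Section Absorption.

Variables rho q : R.
Hypothesis rho_ge0 : 0 <= rho.
Hypothesis q_ge0 : 0 <= q.
Hypothesis q_lt1 : q < 1.

Lemma probB_nonneg b : 0 <= probB q b.
Proof. destruct b; simpl; [lra|]. apply Rmult_le_pos; [lra|now apply pow_le]. Qed.

Lemma ex_series_probB : ex_series (fun j => probB q (S j)).
Proof.
  change (ex_series (fun j => (1 - q) * q ^ j)).
  apply ex_series_Rscal_l, ex_series_geom. rewrite Rabs_pos_eq; lra.
Qed.

Lemma Series_probB : Series (fun j => probB q (S j)) = 1.
Proof.
  change (Series (fun j => (1 - q) * q ^ j) = 1).
  rewrite Series_scal_l, Series_geom by (rewrite Rabs_pos_eq; lra). field. lra.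
Qed.

Lemma Series_probB_mix_le_1 (x : nat -> R) :
  (forall j, 0 <= x j <= 1) ->
  ex_series (fun j => probB q (S j) * x j) /\ Series (fun j => probB q (S j) * x j) <= 1.
Proof.
  intros Hx.
  assert (Hle : forall j, 0 <= probB q (S j) * x j <= probB q (S j)).
  { intros j. assert (Hp := probB_nonneg (S j)). specialize (Hx j). split; nra. }
  split.
  - apply (ex_series_Rle _ (fun j => probB q (S j))); [|exact ex_series_probB].
    intros j. rewrite Rabs_pos_eq; apply Hle.
  - rewrite <- Series_probB. apply Series_le; [exact Hle|exact ex_series_probB].
Qed.

(* The weight (1 - q) q^j of an arrival of j + 1 jobs in [absorb] is [probB q (S j)]. *)
Lemma absorb_S k n b :
  absorb rho q (S k) n (S b) =
  rho / (1 + rho) * Series (fun j => probB q (S j) * absorb rho q k (n + S j) (S b))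
  + 1 / (1 + rho) * (INR n / INR (n + S b) * absorb rho q k (Nat.pred n) (S b)
                    + INR (S b) / INR (n + S b) * absorb rho q k n b).
Proof. reflexivity. Qed.

Lemma absorb_nonneg k : forall n b, 0 <= absorb rho q k n b.
Proof.
  induction k as [|k IH]; intros n [|b]; simpl (absorb _ _ _ _ 0); try lra.
  { simpl. lra. }
  rewrite absorb_S. destruct (INR_ratio_split n b) as [Hc1 [Hc2 _]].
  assert (0 <= rho / (1 + rho)) by (apply Rdiv_le_0_compat; lra).
  assert (0 <= 1 / (1 + rho)) by (apply Rdiv_le_0_compat; lra).
  assert (0 <= Series (fun j => probB q (S j) * absorb rho q k (n + S j) (S b))).
  { apply Series_nonneg. intros j. apply Rmult_le_pos; [apply probB_nonneg|apply IH]. }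
  apply Rplus_le_le_0_compat; apply Rmult_le_pos; auto.
  apply Rplus_le_le_0_compat; apply Rmult_le_pos; auto.
Qed.

Lemma sum_n_absorb_S K n b :
  (forall k m, (k <= K)%nat -> absorb rho q k m (S b) <= 1) ->
  sum_n (fun k => absorb rho q (S k) n (S b)) K =
  rho / (1 + rho)
    * Series (fun j => probB q (S j) * sum_n (fun k => absorb rho q k (n + S j) (S b)) K)
  + 1 / (1 + rho)
    * (INR n / INR (n + S b) * sum_n (fun k => absorb rho q k (Nat.pred n) (S b)) K
       + INR (S b) / INR (n + S b) * sum_n (fun k => absorb rho q k n b) K).
Proof.
  intros Hle1.
  rewrite (sum_n_ext _ _ K (fun k => absorb_S k n b)).
  rewrite sum_n_lin, (sum_n_lin (INR n / INR (n + S b))).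
  f_equal. f_equal.
  destruct (Series_sum_n_comm (fun j k => probB q (S j) * absorb rho q k (n + S j) (S b)) K)
    as [_ <-].
  - intros k Hk. apply Series_probB_mix_le_1. intros j.
    split; [apply absorb_nonneg|now apply Hle1].
  - apply Series_ext. intros j. apply sum_n_Rscal_l.
Qed.

(* The partial masses obey the first-step recursion, whose coefficients form a probability
   vector; so a bound 1 at horizon K propagates to horizon K + 1. *)
Lemma absorb_mass_le_1 K : forall n b, sum_n (fun k => absorb rho q k n b) K <= 1.
Proof.
  induction K as [|K IH]; intros n b.
  { rewrite sum_O. destruct b; simpl; lra. }
  assert (Hmass : forall m c, 0 <= sum_n (fun k => absorb rho q k m c) K <= 1)
    by (intros m c; split; [apply sum_n_nonneg; intros; apply absorb_nonneg|apply IH]).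
  rewrite sum_n_incr_1. destruct b as [|b].
  { rewrite (sum_n_ext _ (fun _ => 0)), sum_n_zero by reflexivity. simpl. lra. }
  rewrite sum_n_absorb_S.
  2: { intros k m Hk. apply Rle_trans with (2 := IH m (S b)).
       apply (term_le_sum_n (fun k => absorb rho q k m (S b))); [|exact Hk].
       intros; apply absorb_nonneg. }
  change (absorb rho q 0 n (S b)) with 0.
  destruct (INR_ratio_split n b) as [Hc1 [Hc2 Hc]].
  destruct (Series_probB_mix_le_1 (fun j => sum_n (fun k => absorb rho q k (n + S j) (S b)) K))
    as [_ Harrival]; [intros j; apply Hmass|].
  destruct (Hmass (Nat.pred n) (S b)) as [_ Hleft].
  destruct (Hmass n b) as [_ Htagged].
  assert (Hservice : INR n / INR (n + S b) * sum_n (fun k => absorb rho q k (Nat.pred n) (S b)) K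
                     + INR (S b) / INR (n + S b) * sum_n (fun k => absorb rho q k n b) K <= 1)
    by nra.
  assert (Hp : rho / (1 + rho) + 1 / (1 + rho) = 1) by (field; lra).
  assert (0 <= rho / (1 + rho)) by (apply Rdiv_le_0_compat; lra).
  assert (0 <= 1 / (1 + rho)) by (apply Rdiv_le_0_compat; lra).
  nra.
Qed.

Lemma absorb_summable n b :
  ex_series (fun k => absorb rho q k n b) /\ Series (fun k => absorb rho q k n b) <= 1.
Proof.
  apply ex_series_bounded_sums; [intros; apply absorb_nonneg|].
  intros K. apply absorb_mass_le_1.
Qed.

End Absorption.

Definition holding_LT (rho : R) (s : C) : C := (RtoC (1 + rho) / (RtoC (1 + rho) + s))%C.

Section Transform.

Variables (rho q : R) (s : C).
Hypothesis rho_ge0 : 0 <= rho.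
Hypothesis q_ge0 : 0 <= q.
Hypothesis q_lt1 : q < 1.
Hypothesis Re_s_ge0 : 0 <= Re s.

Local Notation z := (holding_LT rho s).
Local Notation a := (absorb rho q).
Local Notation e := (estar rho q s).

Lemma estarE n b : e n b = CSeries (fun k => RtoC (a k n b) * Cpow z k)%C.
Proof. reflexivity. Qed.

Lemma holding_denom_neq0 : (RtoC (1 + rho) + s)%C <> 0%C.
Proof.
  intros H. apply (f_equal Re) in H.
  change (Re (RtoC (1 + rho) + s)%C) with (1 + rho + Re s) in H. simpl in H. lra.
Qed.

Lemma Cmod_holding_LT_le_1 : Cmod z <= 1.
Proof.
  unfold holding_LT. rewrite Cmod_div by apply holding_denom_neq0.
  rewrite Cmod_R, Rabs_pos_eq by lra.
  assert (H := re_le_Cmod (RtoC (1 + rho) + s)%C).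
  change (Re (RtoC (1 + rho) + s)%C) with (1 + rho + Re s) in H.
  rewrite Rabs_pos_eq in H by lra.
  apply Rle_div_l; lra.
Qed.

Lemma Cbounded_holding_term (x : R) k : 0 <= x -> Cbounded (RtoC x * Cpow z k)%C x.
Proof.
  intros Hx. rewrite <- (Rmult_1_r x) at 2. rewrite <- (Rabs_pos_eq x Hx) at 2.
  apply Cbounded_scal, Cbounded_Cmod. rewrite Cmod_pow.
  rewrite <- (pow1 k). apply pow_incr. split; [apply Cmod_ge_0|apply Cmod_holding_LT_le_1].
Qed.

Lemma ex_CSeries_holding (x : nat -> R) :
  (forall k, 0 <= x k) -> ex_series x -> ex_CSeries (fun k => RtoC (x k) * Cpow z k)%C.
Proof.
  intros Hx Hex. apply (ex_CSeries_bounded _ x); [|exact Hex].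
  intros k. now apply Cbounded_holding_term.
Qed.

Lemma ex_CSeries_estar n b : ex_CSeries (fun k => RtoC (a k n b) * Cpow z k)%C.
Proof.
  apply ex_CSeries_holding; [intros; now apply absorb_nonneg|].
  now apply absorb_summable.
Qed.

Lemma Cbounded_estar n b : Cbounded (e n b) 1.
Proof.
  destruct (absorb_summable rho q rho_ge0 q_ge0 q_lt1 n b) as [Hex Hle].
  apply Cbounded_le with (2 := Hle). rewrite estarE.
  apply CSeries_bounded; [|exact Hex].
  intros k. apply Cbounded_holding_term, absorb_nonneg; assumption.
Qed.

Lemma estar_n_0 n : e n 0 = 1%C.
Proof.
  rewrite estarE, CSeries_incr_1 by apply ex_CSeries_estar.
  rewrite (CSeries_ext _ (fun _ => 0%C)), CSeries_zero.
  - change (a 0%nat n 0%nat) with 1. simpl Cpow. ring.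
  - intros k. change (a (S k) n 0%nat) with 0. ring.
Qed.

Lemma absorb_mixture_nonneg (w : nat -> R) (m : nat -> nat) b :
  (forall j, 0 <= w j) -> forall j k, 0 <= w j * a k (m j) b.
Proof. intros Hw j k. apply Rmult_le_pos; [apply Hw|now apply absorb_nonneg]. Qed.

Lemma absorb_mixture_rows (w : nat -> R) (m : nat -> nat) b :
  (forall j, 0 <= w j) -> ex_series w ->
  (forall j, ex_series (fun k => w j * a k (m j) b)) /\
  ex_series (fun j => Series (fun k => w j * a k (m j) b)).
Proof.
  intros Hw Hex. split.
  - intros j. apply ex_series_Rscal_l. now apply absorb_summable.
  - apply (ex_series_Rle _ w); [|exact Hex]. intros j.
    destruct (absorb_summable rho q rho_ge0 q_ge0 q_lt1 (m j) b) as [_ Hle].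
    rewrite Series_scal_l, Rabs_pos_eq.
    + specialize (Hw j). nra.
    + apply Rmult_le_pos; [apply Hw|]. apply Series_nonneg. intros k; now apply absorb_nonneg.
Qed.

Lemma estar_mixture (w : nat -> R) (m : nat -> nat) b :
  (forall j, 0 <= w j) -> ex_series w ->
  CSeries (fun k => RtoC (Series (fun j => w j * a k (m j) b)%R) * Cpow z k)%C =
  CSeries (fun j => RtoC (w j) * e (m j) b)%C.
Proof.
  intros Hw Hex.
  destruct (absorb_mixture_rows w m b Hw Hex) as [Hrow Hrows].
  rewrite (CSeries_ext _ (fun k => CSeries (fun j => RtoC (w j * a k (m j) b)%R * Cpow z k)%C))
    by (intros k; symmetry; apply CSeries_scal_R_r).
  rewrite (CSeries_comm _ (fun j k => w j * a k (m j) b)); auto.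
  - apply CSeries_ext. intros j. rewrite estarE, <- CSeries_scal_R.
    apply CSeries_ext. intros k. rewrite RtoC_mult. symmetry. apply Cmult_assoc.
  - intros j k. apply Cbounded_holding_term. now apply absorb_mixture_nonneg.
Qed.

Lemma ex_series_absorb_mixture (w : nat -> R) (m : nat -> nat) b :
  (forall j, 0 <= w j) -> ex_series w ->
  ex_series (fun k => Series (fun j => w j * a k (m j) b)).
Proof.
  intros Hw Hex. destruct (absorb_mixture_rows w m b Hw Hex) as [Hrow Hrows].
  now destruct (Series_comm_nonneg _ (absorb_mixture_nonneg w m b Hw) Hrow Hrows) as [_ [H _]].
Qed.

Lemma estar_shift n b :
  e n (S b) = (z * CSeries (fun k => RtoC (a (S k) n (S b)) * Cpow z k))%C.
Proof.
  assert (Hex : ex_series (fun k => a (S k) n (S b)))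
    by (apply (ex_series_incr_1 (fun k => a k n (S b))); now apply absorb_summable).
  rewrite estarE, CSeries_incr_1, <- CSeries_scal
    by (apply ex_CSeries_estar || (apply ex_CSeries_holding; auto; intros; now apply absorb_nonneg)).
  change (a 0%nat n (S b)) with 0. rewrite Cmult_0_l, Cplus_0_l.
  apply CSeries_ext. intros k. simpl. ring.
Qed.

Lemma absorb_S_transform n b :
  CSeries (fun k => RtoC (a (S k) n (S b)) * Cpow z k)%C =
  (RtoC (rho / (1 + rho))%R * CSeries (fun j => RtoC (probB q (S j)) * e (n + S j)%nat (S b))
   + RtoC (1 / (1 + rho))%R * (RtoC (INR n / INR (n + S b))%R * e (Nat.pred n) (S b)
                               + RtoC (INR (S b) / INR (n + S b))%R * e n b))%C.
Proof.
  assert (Hw : forall j, 0 <= probB q (S j)) by (intros j; now apply probB_nonneg).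
  assert (Hwex := ex_series_probB q q_ge0 q_lt1).
  rewrite <- (estar_mixture _ (fun j => n + S j)%nat (S b) Hw Hwex).
  set (Y := fun k => Series (fun j => probB q (S j) * a k (n + S j)%nat (S b))).
  set (c1 := INR n / INR (n + S b)). set (c2 := INR (S b) / INR (n + S b)).
  rewrite (CSeries_ext _ (fun k => RtoC (rho / (1 + rho))%R * (RtoC (Y k) * Cpow z k)
      + (RtoC (1 / (1 + rho) * c1)%R * (RtoC (a k (Nat.pred n) (S b)) * Cpow z k)
         + RtoC (1 / (1 + rho) * c2)%R * (RtoC (a k n b) * Cpow z k)))%C).
  - rewrite !CSeries_plus, !CSeries_scal_R, <- !estarE, !RtoC_mult.
    + unfold Y. ring.
    + apply ex_CSeries_scal_R, ex_CSeries_estar.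
    + apply ex_CSeries_scal_R, ex_CSeries_estar.
    + apply ex_CSeries_scal_R, ex_CSeries_holding.
      * intros k. apply Series_nonneg. intros j.
        exact (absorb_mixture_nonneg _ (fun j => n + S j)%nat (S b) Hw j k).
      * now apply ex_series_absorb_mixture.
    + apply ex_CSeries_plus; apply ex_CSeries_scal_R, ex_CSeries_estar.
  - intros k. change (a (S k) n (S b)) with
      (rho / (1 + rho) * Y k + 1 / (1 + rho) * (c1 * a k (Nat.pred n) (S b) + c2 * a k n b)).
    repeat rewrite ?RtoC_plus, ?RtoC_mult. ring.
Qed.

Lemma estar_first_step n b :
  ((RtoC (1 + rho) + s) * e n (S b) =
   RtoC rho * CSeries (fun j => RtoC (probB q (S j)) * e (n + S j)%nat (S b))
   + RtoC (INR n / INR (n + S b))%R * e (Nat.pred n) (S b)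
   + RtoC (INR (S b) / INR (n + S b))%R * e n b)%C.
Proof.
  rewrite estar_shift, absorb_S_transform.
  unfold holding_LT. rewrite !RtoC_div by lra.
  field. split; [apply RtoC_neq0; lra|apply holding_denom_neq0].
Qed.

End Transform.

Definition estar_weighted (rho q : R) (s : C) (g : nat -> nat -> R) : C :=
  CSeries (fun n => CSeries (fun b => RtoC (g n b) * estar rho q s n (S b)))%C.

Definition abs_summable2 (g : nat -> nat -> R) : Prop :=
  (forall n, ex_series (fun b => Rabs (g n b))) /\
  ex_series (fun n => Series (fun b => Rabs (g n b))).

Lemma abs_summable2_geom (x y : R) :
  0 <= x < 1 -> 0 <= y < 1 -> abs_summable2 (fun n b => x ^ n * y ^ S b).
Proof.
  intros Hx Hy.
  assert (Habs : forall n b, Rabs (x ^ n * y ^ S b) = x ^ n * (y * y ^ b)).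
  { intros n b. rewrite Rabs_pos_eq; [reflexivity|]. apply Rmult_le_pos; apply pow_le; lra. }
  assert (Hgeom : forall t, 0 <= t < 1 -> ex_series (fun n => t ^ n))
    by (intros t Ht; apply ex_series_geom; rewrite Rabs_pos_eq; lra).
  split.
  - intros n. eapply ex_series_ext; [intros b; symmetry; apply Habs|].
    now apply ex_series_Rscal_l, ex_series_Rscal_l, Hgeom.
  - apply (ex_series_ext (fun n => Series (fun b => y * y ^ b) * x ^ n)).
    + intros n. rewrite (Series_ext _ _ (Habs n)), (Series_scal_l (x ^ n)). apply Rmult_comm.
    + now apply ex_series_Rscal_l, Hgeom.
Qed.

Lemma abs_summable2_scal (c : R) (g : nat -> nat -> R) :
  abs_summable2 g -> abs_summable2 (fun n b => c * g n b).
Proof.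
  intros [Hrow Hrows].
  assert (Habs : forall n b, Rabs (c * g n b) = Rabs c * Rabs (g n b)) by (intros; apply Rabs_mult).
  split.
  - intros n. eapply ex_series_ext; [intros b; symmetry; apply Habs|].
    now apply ex_series_Rscal_l.
  - apply (ex_series_ext (fun n => Rabs c * Series (fun b => Rabs (g n b)))).
    + intros n. now rewrite (Series_ext _ _ (Habs n)), Series_scal_l.
    + now apply ex_series_Rscal_l.
Qed.

Lemma CSeries_comm_abs_summable2 (a : nat -> nat -> C) (g : nat -> nat -> R) :
  abs_summable2 g -> (forall n b, Cbounded (a n b) (Rabs (g n b))) ->
  CSeries (fun b => CSeries (fun n => a n b)) = CSeries (fun n => CSeries (a n)).
Proof. intros [Hrow Hrows] Ha. now apply (CSeries_comm _ (fun n b => Rabs (g n b))). Qed.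

Section WeightedSums.

Variables (rho q : R) (s : C).
Hypothesis rho_ge0 : 0 <= rho.
Hypothesis q_ge0 : 0 <= q.
Hypothesis q_lt1 : q < 1.
Hypothesis Re_s_ge0 : 0 <= Re s.

Local Notation e := (estar rho q s).
Local Notation W := (estar_weighted rho q s).

Lemma Cbounded_weighted_term (x : R) n b : Cbounded (RtoC x * e n b)%C (Rabs x).
Proof.
  rewrite <- (Rmult_1_r (Rabs x)). apply Cbounded_scal. now apply Cbounded_estar.
Qed.

Lemma ex_CSeries_weighted_row (g : nat -> nat -> R) n :
  abs_summable2 g -> ex_CSeries (fun b => RtoC (g n b) * e n (S b))%C.
Proof.
  intros [Hrow _]. apply (ex_CSeries_bounded _ _ (fun b => Cbounded_weighted_term _ n (S b))).
  apply Hrow.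
Qed.

Lemma ex_CSeries_weighted (g : nat -> nat -> R) :
  abs_summable2 g -> ex_CSeries (fun n => CSeries (fun b => RtoC (g n b) * e n (S b)))%C.
Proof.
  intros [Hrow Hrows]. apply (ex_CSeries_bounded _ _ (fun n =>
    CSeries_bounded _ _ (fun b => Cbounded_weighted_term _ n (S b)) (Hrow n))).
  exact Hrows.
Qed.

Lemma estar_weighted_lin (g1 g2 : nat -> nat -> R) (x y : R) :
  abs_summable2 g1 -> abs_summable2 g2 ->
  W (fun n b => x * g1 n b + y * g2 n b) = (RtoC x * W g1 + RtoC y * W g2)%C.
Proof.
  intros H1 H2. unfold estar_weighted.
  rewrite <- !CSeries_scal_R, <- CSeries_plus
    by (apply ex_CSeries_scal_R, ex_CSeries_weighted; assumption).
  apply CSeries_ext. intros n.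
  rewrite <- !CSeries_scal_R, <- CSeries_plus
    by (apply ex_CSeries_scal_R, ex_CSeries_weighted_row; assumption).
  apply CSeries_ext. intros b. rewrite RtoC_plus, !RtoC_mult. ring.
Qed.

Lemma Egen_weighted (x : R) :
  Egen rho q s (RtoC x) (RtoC q) = W (fun n b => x ^ n * q ^ S b).
Proof.
  apply CSeries_ext. intros n. apply CSeries_ext. intros b.
  rewrite RtoC_mult, <- !RtoC_pow. ring.
Qed.

End WeightedSums.

Section FirstStepSummed.

Variables (rho q : R) (s : C).
Hypothesis rho_ge0 : 0 <= rho.
Hypothesis q_gt0 : 0 < q.
Hypothesis q_lt1 : q < 1.
Hypothesis Re_s_ge0 : 0 <= Re s.

Local Notation e := (estar rho q s).
Local Notation Eg x := (Egen rho q s (RtoC x) (RtoC q)).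
Local Notation arrival_mix b :=
  (CSeries (fun j => RtoC (probB q (S j)) * estar rho q s (S j) (S b))%C).
Local Notation head := (CSeries (fun b => RtoC (q ^ S b) * estar rho q s 0 (S b))%C).
Local Notation tail :=
  (CSeries (fun j => CSeries (fun b => RtoC (q ^ S j * q ^ S b)%R * estar rho q s (S j) (S b)))%C).

Let q_ge0 : 0 <= q := Rlt_le _ _ q_gt0.

Lemma estar_first_step_empty b :
  ((RtoC (1 + rho) + s) * e 0 (S b) = RtoC rho * arrival_mix b + e 0 b)%C.
Proof.
  rewrite (estar_first_step rho q s rho_ge0 q_ge0 q_lt1 Re_s_ge0 0 b).
  change (INR 0) with 0. rewrite Rdiv_0_l, Rdiv_diag by (apply not_0_INR; lia).
  simpl (Nat.add 0). rewrite Cmult_0_l, Cplus_0_r, Cmult_1_l. reflexivity.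
Qed.

Lemma Cbounded_arrival_mix b : Cbounded (arrival_mix b) 1.
Proof.
  rewrite <- (Series_probB q q_ge0 q_lt1).
  rewrite (Series_ext _ (fun j => Rabs (probB q (S j))))
    by (intros j; symmetry; apply Rabs_pos_eq, probB_nonneg; lra).
  apply CSeries_bounded.
  - intros j. apply Cbounded_weighted_term; assumption || lra.
  - eapply ex_series_ext; [|apply (ex_series_probB q q_ge0 q_lt1)].
    intros j. symmetry. apply Rabs_pos_eq, probB_nonneg; lra.
Qed.

Lemma Egen_head_tail (x : R) :
  0 <= x < 1 ->
  Eg x = (head + CSeries (fun j => CSeries (fun b =>
            RtoC (x ^ S j * q ^ S b)%R * e (S j) (S b))))%C.
Proof.
  intros Hx. rewrite Egen_weighted. unfold estar_weighted.
  rewrite CSeries_incr_1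
    by (apply (ex_CSeries_weighted rho q s); auto; apply abs_summable2_geom; lra).
  f_equal. apply CSeries_ext. intros b. now rewrite pow_O, Rmult_1_l.
Qed.

Lemma Egen_zero : Eg 0 = head.
Proof.
  rewrite Egen_head_tail by lra.
  assert (Htail : CSeries (fun j => CSeries (fun b =>
                    RtoC (0 ^ S j * q ^ S b)%R * e (S j) (S b)))%C = 0%C).
  { rewrite <- CSeries_zero. apply CSeries_ext. intros j.
    rewrite <- CSeries_zero. apply CSeries_ext. intros b.
    rewrite pow_ne_zero, Rmult_0_l by lia. apply Cmult_0_l. }
  rewrite Htail. apply Cplus_0_r.
Qed.

Lemma Egen_q : Eg q = (head + tail)%C.
Proof. apply Egen_head_tail. lra. Qed.

Lemma arrival_sum :
  CSeries (fun b => RtoC (q ^ S b) * arrival_mix b)%C = (RtoC ((1 - q) / q) * tail)%C.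
Proof.
  set (g := fun j b => (1 - q) * (q ^ j * q ^ S b)).
  rewrite (CSeries_ext _ (fun b => CSeries (fun j => RtoC (g j b) * e (S j) (S b))%C)).
  2: { intros b. rewrite <- CSeries_scal_R. apply CSeries_ext. intros j.
       unfold g. simpl probB. rewrite !RtoC_mult. ring. }
  rewrite (CSeries_comm_abs_summable2 _ g).
  - rewrite <- CSeries_scal_R. apply CSeries_ext. intros j.
    rewrite <- CSeries_scal_R. apply CSeries_ext. intros b.
    rewrite Cmult_assoc, <- RtoC_mult. f_equal. f_equal.
    unfold g. simpl pow. field. lra.
  - apply abs_summable2_scal, abs_summable2_geom; lra.
  - intros j b. apply Cbounded_weighted_term; assumption.
Qed.

Lemma ex_series_Rabs_geom_S : ex_series (fun b => Rabs (q ^ S b)).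
Proof.
  eapply ex_series_ext; [intros b; symmetry; apply Rabs_pos_eq, pow_le; lra|].
  apply ex_series_Rscal_l, ex_series_geom. rewrite Rabs_pos_eq; lra.
Qed.

Lemma ex_CSeries_geom_estar n (m : nat -> nat) :
  ex_CSeries (fun b => RtoC (q ^ S b) * e n (m b))%C.
Proof.
  apply (ex_CSeries_bounded _ _ (fun b => Cbounded_weighted_term rho q s rho_ge0 q_ge0 q_lt1
    Re_s_ge0 _ n (m b))).
  exact ex_series_Rabs_geom_S.
Qed.

Lemma service_sum : CSeries (fun b => RtoC (q ^ S b) * e 0 b)%C = (RtoC q * (1 + head))%C.
Proof.
  rewrite CSeries_incr_1.
  - rewrite estar_n_0 by assumption.
    rewrite Cmult_plus_distr_l. f_equal.
    + simpl pow. now rewrite Rmult_1_r.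
    + rewrite <- CSeries_scal_R. apply CSeries_ext. intros b. change (q ^ S (S b)) with (q * q ^ S b).
      rewrite RtoC_mult. symmetry. apply Cmult_assoc.
  - exact (ex_CSeries_geom_estar 0 (fun b => b)).
Qed.

Lemma head_first_step :
  ((RtoC (1 + rho) + s) * head = RtoC rho * (RtoC ((1 - q) / q) * tail) + RtoC q * (1 + head))%C.
Proof.
  rewrite <- CSeries_scal by exact (ex_CSeries_geom_estar 0 S).
  rewrite (CSeries_ext _ (fun b => RtoC rho * (RtoC (q ^ S b) * arrival_mix b)
                                  + RtoC (q ^ S b) * e 0 b)%C).
  2: { intros b. rewrite Cmult_comm, <- Cmult_assoc, (Cmult_comm _ (RtoC _ + s)).
       rewrite estar_first_step_empty. ring. }
  rewrite CSeries_plus.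
  - now rewrite CSeries_scal_R, arrival_sum, service_sum.
  - apply ex_CSeries_scal_R.
    apply (ex_CSeries_bounded _ (fun b => Rabs (q ^ S b) * 1)).
    + intros b. apply Cbounded_scal, Cbounded_arrival_mix.
    + eapply ex_series_ext; [intros b; symmetry; apply Rmult_1_r|].
      exact ex_series_Rabs_geom_S.
  - exact (ex_CSeries_geom_estar 0 (fun b => b)).
Qed.

Lemma Egen_zero_identity :
  ((RtoC q + RtoC rho + RtoC q * s - RtoC (q ^ 2)) * Eg 0 =
   RtoC rho * RtoC (1 - q) * Eg q + RtoC (q ^ 2))%C.
Proof.
  rewrite Egen_zero, Egen_q.
  transitivity (RtoC q * ((RtoC (1 + rho) + s) * head) + RtoC rho * RtoC (1 - q) * head
                - RtoC q * RtoC q * head)%C.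
  { rewrite RtoC_plus, RtoC_minus, RtoC_pow. ring. }
  rewrite head_first_step, RtoC_div by lra.
  rewrite RtoC_pow, RtoC_minus. field. now apply RtoC_neq0, Rgt_not_eq.
Qed.

End FirstStepSummed.

Lemma probN_probB_split rho q n b :
  0 < q -> q < 1 -> 0 < rho + q ->
  probN rho q n * probB q (S b) =
  (1 - rho - q) / (q * (rho + q)) * q * (0 ^ n * q ^ S b)
  + (1 - rho - q) / (q * (rho + q)) * rho * ((rho + q) ^ n * q ^ S b).
Proof.
  intros Hq0 Hq1 Hrq.
  destruct n as [|n]; simpl probN; simpl probB; simpl pow; field; repeat split; lra.
Qed.

Lemma sojournLT_split rho q s :
  0 <= rho -> 0 < q -> q < 1 -> rho + q < 1 -> 0 <= Re s ->
  sojournLT rho q s =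
  (RtoC ((1 - rho - q) / (q * (rho + q)))
   * (RtoC q * Egen rho q s (RtoC 0) (RtoC q)
      + RtoC rho * Egen rho q s (RtoC (rho + q)) (RtoC q)))%C.
Proof.
  intros Hrho Hq0 Hq1 Hrq Hs.
  rewrite !Egen_weighted, Cmult_plus_distr_l, !Cmult_assoc, <- !RtoC_mult.
  rewrite <- estar_weighted_lin by (assumption || lra || (apply abs_summable2_geom; lra)).
  apply CSeries_ext. intros n. apply CSeries_ext. intros b.
  rewrite <- Cmult_assoc, <- RtoC_mult, probN_probB_split by lra.
  apply Cmult_comm.
Qed.

Lemma Fgen_off_diag rho q s u v :
  u <> RtoC q ->
  Fgen rho q s u v = ((Egen rho q s u v - Egen rho q s (RtoC q) v) / (u - RtoC q))%C.
Proof.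
  intros Hu. unfold Fgen.
  destruct (excluded_middle_informative (u = RtoC q)); [contradiction|reflexivity].
Qed.

Theorem mainTheorem1 (rho q : R) (s : C) :
  0 < rho -> 0 < q -> q < 1 -> rho + q < 1 -> 0 <= Re s ->
  sojournLT rho q s =
  (RtoC ((1 - rho - q) / (q * (rho + q))) *
   (RtoC (rho ^ 2) * Fgen rho q s (RtoC (rho + q)) (RtoC q)
    + (RtoC (q ^ 3)
       + RtoC rho * (RtoC q * s + RtoC rho + RtoC (2 * q * (1 - q)))
         * Egen rho q s (RtoC q) (RtoC q))
      / (RtoC q + RtoC rho + RtoC q * s - RtoC (q ^ 2))))%C.
Proof.
  intros Hrho Hq0 Hq1 Hrq Hs.
  assert (Hoff : RtoC (rho + q) <> RtoC q) by (intros H; apply RtoC_inj in H; lra).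
  rewrite sojournLT_split, (Fgen_off_diag _ _ _ _ _ Hoff) by lra.
  f_equal.
  set (D := (RtoC q + RtoC rho + RtoC q * s - RtoC (q ^ 2))%C).
  assert (HD : D <> 0%C).
  { intros H. apply (f_equal Re) in H. unfold D in H.
    change (q + rho + (q * Re s - 0 * Im s) - q ^ 2 = 0) in H. nra. }
  assert (HE0 := Egen_zero_identity rho q s (Rlt_le _ _ Hrho) Hq0 Hq1 Hs). fold D in HE0.
  replace (Egen rho q s (RtoC 0) (RtoC q))
    with ((RtoC rho * RtoC (1 - q) * Egen rho q s (RtoC q) (RtoC q) + RtoC (q ^ 2)) / D)%C
    by (rewrite <- HE0; field; exact HD).
  unfold D in *. rewrite !RtoC_pow, !RtoC_mult, RtoC_plus, RtoC_minus in *.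
  field. split; [exact HD|].
  replace (RtoC rho + RtoC q - RtoC q)%C with (RtoC rho) by ring.
  apply RtoC_neq0. lra.
Qed.
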